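(* Let $C'$ be an odd-like binary Euclidean LCD $[n,k,d]$ code with $k\ge 1$. Then there exist a binary Euclidean LCD $[n,k-1,d']$ code $C$ with $d'\ge d$ (when $k\ge 2$), a generator matrix $G$ of $C$, and a vector $\mathbf{y}\in C^{\perp_E}$ of odd Hamming weight, such that $C'$ is equivalent to the binary code with generator matrix $\begin{pmatrix}\mathbf{y}\\ G\end{pmatrix}$.
   Context: A binary $[n,k,d]$ code is a $k$-dimensional subspace of $\mathbb{F}_2^n$ with minimum nonzero Hamming weight $d$. $C^{\perp_E}$ is the dual with respect to $\langle x,y\rangle_E=\sum x_iy_i$; $C$ is LCD if $C\cap C^{\perp_E}=\{0\}$. A binary code is odd-like if it contains a codeword $x$ with $\sum x_i=1$. Two codes are equivalent if one is obtained from the other by a coordinate permutation (monomial transformation). *)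

From mathcomp Require Import all_boot all_order all_fingroup all_algebra.
Set Implicit Arguments. Unset Strict Implicit. Unset Printing Implicit Defensive.
Import GRing.Theory.
Local Open Scope ring_scope.

Notation F2 := 'F_2.

Definition wt n (v : 'rV[F2]_n) : nat := #|[set i : 'I_n | v 0 i != 0]|.

(* A code of length n is the row space of a matrix C (mxalgebra style);
   its dimension is \rank C; v is a codeword iff (v <= C)%MS. *)

Definition edual m n (C : 'M[F2]_(m, n)) : 'M[F2]_n := kermx C^T.

Definition is_LCD m n (C : 'M[F2]_(m, n)) : Prop := ((C :&: edual C)%MS <= (0 : 'rV[F2]_n))%MS.

Definition min_dist m n (C : 'M[F2]_(m, n)) (d : nat) : Prop :=
  (exists2 v : 'rV[F2]_n, (v <= C)%MS & (v != 0) /\ wt v = d) /\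
  (forall v : 'rV[F2]_n, (v <= C)%MS -> v != 0 -> (d <= wt v)%N).

Definition odd_like m n (C : 'M[F2]_(m, n)) : Prop :=
  exists2 x : 'rV[F2]_n, (x <= C)%MS & \sum_(i < n) x 0 i = 1.

Definition generator_matrix k m n (G : 'M[F2]_(k, n)) (C : 'M[F2]_(m, n)) : Prop :=
  row_free G /\ (G == C)%MS.

Definition code_equiv m1 m2 n (C1 : 'M[F2]_(m1, n)) (C2 : 'M[F2]_(m2, n)) : Prop :=
  exists s : 'S_n, (col_perm s C1 == C2)%MS.

(** Over GF(2), [x . x = sum_i x_i], so an odd-like code C' contains a word
    y with [y . y = 1]. Such a y is not self-orthogonal, hence C' splits as
    the direct sum of the line spanned by y and C := C' ∩ y^⊥. Then C has
    dimension k - 1, it inherits the LCD property (a word of C ∩ C^⊥ is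
    orthogonal to both y and C, hence to C', and lies in C'), its minimum
    distance is at least that of C' because C is a subcode, and y lies in
    C^⊥ by construction; y stacked on a basis of C generates C' itself. *)
From mathcomp Require Import all_boot all_order all_fingroup all_algebra.
From mathcomp Require Import finfield.
Set Implicit Arguments. Unset Strict Implicit. Unset Printing Implicit Defensive.
Import GRing.Theory.
Local Open Scope ring_scope.

Section OrthogonalComplementOfAVector.

Variables (F : fieldType) (n : nat).

Lemma sub_kermx_trC m1 m2 (A : 'M[F]_(m1, n)) (B : 'M[F]_(m2, n)) :
  (A <= kermx B^T)%MS = (B <= kermx A^T)%MS.
Proof.
by rewrite !sub_kermx -[A *m B^T]trmxK trmx_mul trmxK trmx_eq0.
Qed.

Lemma kermx_trS m1 m2 (A : 'M[F]_(m1, n)) (B : 'M[F]_(m2, n)) :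
  (A <= B)%MS -> (kermx B^T <= kermx A^T)%MS.
Proof.
case/submxP=> D ->; apply/sub_kermxP.
by rewrite trmx_mul mulmxA mulmx_ker mul0mx.
Qed.

Lemma kermx_tr_adds m1 m2 (A : 'M[F]_(m1, n)) (B : 'M[F]_(m2, n)) :
  (kermx A^T :&: kermx B^T <= kermx ((A + B)%MS)^T)%MS.
Proof.
have AB_col : ((A + B)%MS <= col_mx A B)%MS by rewrite addsmxE.
apply: submx_trans _ (kermx_trS AB_col); apply/sub_kermxP.
rewrite tr_col_mx mul_mx_row.
by rewrite (sub_kermxP (capmxSl _ _)) (sub_kermxP (capmxSr _ _)) row_mx0.
Qed.

Variable y : 'rV[F]_n.
Hypothesis y_unit : y *m y^T = 1%:M.

Lemma line_cap_orth m (A : 'M[F]_(m, n)) : (y :&: (A :&: kermx y^T))%MS = 0.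
Proof.
apply/eqP; rewrite -submx0; apply/rV_subP=> v.
rewrite sub_capmx => /andP[/sub_rVP[a ->] ay_orth].
have /sub_kermxP : (a *: y <= kermx y^T)%MS := submx_trans ay_orth (capmxSr _ _).
rewrite -scalemxAl y_unit => /matrixP/(_ 0 0).
by rewrite !mxE mulr1 => ->; rewrite scale0r sub0mx.
Qed.

Lemma line_adds_orth m (A : 'M[F]_(m, n)) :
  (y <= A)%MS -> (y + (A :&: kermx y^T) :=: A)%MS.
Proof.
move=> yA; apply/eqmxP; rewrite addsmx_sub yA capmxSl /=.
rewrite -[A in (A <= _)%MS](subrK ((A *m y^T) *m y)) addrC.
apply: addmx_sub_adds; first exact: submxMl.
rewrite sub_capmx; apply/andP; split.
  by rewrite addmx_sub // eqmx_opp (submx_trans (submxMl _ _) yA).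
by apply/sub_kermxP; rewrite mulmxBl -[_ *m y *m y^T]mulmxA y_unit mulmx1 subrr.
Qed.

Lemma mxrank_cap_orth m (A : 'M[F]_(m, n)) :
  (y <= A)%MS -> \rank (A :&: kermx y^T) = (\rank A).-1.
Proof.
move=> yA; have y_neq0 : y != 0.
  by apply: contraNneq (matrix_nonzero1 F 0) => y0; rewrite -y_unit y0 mul0mx.
rewrite -(line_adds_orth yA) (mxrank_disjoint_sum (line_cap_orth A)).
by rewrite rank_rV y_neq0.
Qed.

End OrthogonalComplementOfAVector.

Lemma F2_mulrr (x : 'F_2) : x * x = x.
Proof. by rewrite -expr2 -[in RHS](expf_card x) card_Fp. Qed.

Lemma F2_neq0 (x : 'F_2) : x != 0 -> x = 1.
Proof. by case: x => [[|[|//]] lt_x2] // _; apply: val_inj. Qed.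

Lemma F2_natr m : (m%:R : 'F_2) = (odd m)%:R.
Proof. by rewrite -Fp_nat_mod // modn2. Qed.

Lemma F2_sum_wt n (v : 'rV['F_2]_n) : \sum_i v 0 i = (odd (wt v))%:R.
Proof.
rewrite -F2_natr /wt -sumr_const (bigID (fun i => v 0 i != 0)) /=.
rewrite [X in _ + X]big1 => [|i /negbNE/eqP //]; rewrite addr0.
by apply: eq_big => [i | i /F2_neq0]; rewrite ?inE.
Qed.

Lemma F2_dotmx_self n (v : 'rV['F_2]_n) : v *m v^T = (\sum_i v 0 i)%:M.
Proof.
rewrite [LHS]mx11_scalar mxE; congr _%:M.
by apply: eq_bigr => i _; rewrite mxE F2_mulrr.
Qed.

Lemma is_LCD_cap_orth m n (A : 'M['F_2]_(m, n)) (y : 'rV_n) :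
  (y <= A)%MS -> y *m y^T = 1%:M -> is_LCD A -> is_LCD (A :&: kermx y^T)%MS.
Proof.
move=> yA y_unit lcdA; apply: submx_trans _ lcdA; set C := (A :&: kermx y^T)%MS.
rewrite /edual sub_capmx (submx_trans (capmxSl _ _) (capmxSl _ _)) /=.
have A_sub : (A <= y + C)%MS by rewrite line_adds_orth.
apply: submx_trans _ (kermx_trS A_sub); apply: submx_trans _ (kermx_tr_adds y C).
by rewrite capmxS // capmxSr.
Qed.

Section MinimumDistance.

Variables (m n : nat) (C : 'M['F_2]_(m, n)).

Lemma min_dist_exists : C != 0 -> exists d, min_dist C d.
Proof.
move=> /rowV0Pn[v vC v_neq0].
pose has_wt d := [exists w : 'rV_n, [&& (w <= C)%MS, w != 0 & wt w == d]].
have [|d /existsP[w /and3P[wC w_neq0 /eqP wt_w]] d_min] := ex_minnP (P := has_wt).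
  by exists (wt v); apply/existsP; exists v; rewrite vC v_neq0 /=.
exists d; split; first by exists w.
by move=> u uC u_neq0; apply: d_min; apply/existsP; exists u; rewrite uC u_neq0 /=.
Qed.

Lemma min_dist_subcode m' (C' : 'M['F_2]_(m', n)) d d' :
  (C <= C')%MS -> min_dist C' d -> min_dist C d' -> (d <= d')%N.
Proof.
move=> CC' [_ d_min] [[v vC [v_neq0 <-]] _].
exact: d_min (submx_trans vC CC') v_neq0.
Qed.

End MinimumDistance.

Lemma generator_matrix_row_base m n (C : 'M['F_2]_(m, n)) :
  generator_matrix (row_base C) C.
Proof. by split; [exact: row_base_free | apply/eqmxP; exact: eq_row_base]. Qed.

Theorem theorem3p11 (n k d : nat) (C' : 'M['F_2]_n) :
  (1 <= k)%N -> \rank C' = k -> is_LCD C' -> min_dist C' d -> odd_like C' ->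
  exists (C : 'M['F_2]_n) (G : 'M['F_2]_(k.-1, n)) (y : 'rV['F_2]_n),
    [/\ \rank C = k.-1, is_LCD C,
        ((1 < k)%N -> exists2 d' : nat, min_dist C d' & (d <= d')%N),
        generator_matrix G C &
        [/\ (y <= edual C)%MS, odd (wt y) & code_equiv C' (col_mx y G)]].
Proof.
move=> k_gt0 rkC' lcdC' distC' [y yC' sum_y].
have y_unit : y *m y^T = 1%:M by rewrite F2_dotmx_self sum_y.
pose C := (C' :&: kermx y^T)%MS.
have rkC : \rank C = k.-1 by rewrite mxrank_cap_orth // rkC'.
have [G genG] : exists G : 'M_(k.-1, n), generator_matrix G C.
  by rewrite -rkC; exists (row_base C); exact: generator_matrix_row_base.
exists C, G, y; split=> //.
- exact: is_LCD_cap_orth.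
- move=> k_gt1; have /min_dist_exists[d' distC] : C != 0.
    by rewrite -mxrank_eq0 rkC -lt0n -ltnS prednK.
  by exists d' => //; apply: min_dist_subcode (capmxSl _ _) distC' distC.
split.
- by rewrite /edual sub_kermx_trC capmxSr.
- by move: sum_y; rewrite F2_sum_wt; case: odd => // /esym/eqP; rewrite oner_eq0.
- exists 1%g; rewrite col_perm1; case: genG => _ /eqmxP GC.
  by rewrite -!addsmxE !(adds_eqmx (eqmx_refl y) GC) !line_adds_orth // submx_refl.
Qed.
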